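(* Let $n>0$ and $c>1$. In the no-communication setting, every deterministic algorithm that guarantees rendezvous of the two agents for all initial placements on the cycle of length $n$ has rendezvous time at least $\frac{cn}{c^2-1}$.
   Context: Model: the cycle is the continuous circle $\mathbb{R}/n\mathbb{Z}$ of length $n$; it is anonymous (no marked points). Two agents $A$ and $B$ are placed by an adversary at arbitrary initial points and start at the same time. Both run the same deterministic algorithm; they are identical except for their speeds: the slower agent $B$ has speed $1$ and the faster agent $A$ has speed $c>1$ (an agent does not know whether it is the faster or the slower one). Both agents know $n$ and $c$, have a common sense of direction (clockwise vs. anti-clockwise), and have a pedometer measuring the total distance they have travelled (a ''step'' is one unit of travelled distance, possibly split among directions). At any moment an agent may start moving, continue, stop, or reverse direction; an agent's behaviour is a deterministic function of its own travelled distance (equivalently, its local step count) and of what it has observed so far, so that, absent any observation, an agent of speed $s$ is at real time $t$ where an agent of speed $1$ running the same algorithm would be at time $st$. Agents detect each other when they are at the same point (rendezvous). No-communication setting: the agents cannot observe anything other than the other agent being at their current location (no markers of any kind). The rendezvous time of an algorithm is the worst case, over all initial placements of the two agents, of the time until the agents are co-located. *)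

(* continuous cycle R/nZ modelled via its universal cover R. *)
From Stdlib Require Import Reals Lra ZArith.
Open Scope R_scope.

(* A deterministic algorithm, in the no-communication setting, is (until
   rendezvous, the only possible observation) a fixed trajectory
   [p : R -> R] : p s is the displacement (in the universal cover R of the
   cycle, positive = clockwise) of an agent after s units of its local
   time / step count.  Since an agent of speed 1 travels at most distance
   |s1 - s2| in local time |s1 - s2|, p is 1-Lipschitz on [0,oo), and
   p 0 = 0.  Only the values of p on [0,oo) matter. *)
Definition algorithm (p : R -> R) : Prop :=
  p 0 = 0 /\
  forall s1 s2, 0 <= s1 -> 0 <= s2 -> Rabs (p s1 - p s2) <= Rabs (s1 - s2).

Definition pos (p : R -> R) (s x t : R) : R := x + p (s * t).

Definition same_point (n : R) (u v : R) : Prop :=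
  exists k : Z, u - v = IZR k * n.

Definition meet (n c : R) (p : R -> R) (a b t : R) : Prop :=
  same_point n (pos p c a t) (pos p 1 b t).

Definition guarantees_rendezvous (n c : R) (p : R -> R) : Prop :=
  forall a b : R, exists t, 0 <= t /\ meet n c p a b t.

Definition first_meeting (n c : R) (p : R -> R) (a b tau : R) : Prop :=
  0 <= tau /\ meet n c p a b tau /\
  forall t, 0 <= t < tau -> ~ meet n c p a b t.

(* The rendezvous time of the algorithm (the supremum over all placements of
   the first meeting time) is at least L: every upper bound M of the set of
   first meeting times satisfies L <= M. *)
Definition rendezvous_time_at_least (n c : R) (p : R -> R) (L : R) : Prop :=
  forall M : R,
    (forall a b tau, first_meeting n c p a b tau -> tau <= M) -> L <= M.

From Pilot Require Import Defs.
From Stdlib Require Import Reals Lra Lia ZArith.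
Open Scope R_scope.

(* Both agents follow the same trajectory p, at speeds c and 1, so the agents
   started at a and b meet at time t iff the drift  d(t) = p(ct) - p(t)  is
   congruent to b - a modulo n.  As p is 1-Lipschitz with p 0 = 0, the drift is
   (c+1)-Lipschitz and |d(t)| <= (c-1) t; together these bounds show that d
   oscillates by at most (c^2-1) M / c on [0, M].  If every first meeting time
   were at most M < c n / (c^2 - 1), this oscillation would be < n, so some
   offset b - a keeps d(t) - (b - a) strictly inside (-n, 0), hence off nZ, on
   the whole of [0, M].  Rendezvous still happens for that placement, and by
   continuity the first time the shifted drift leaves (-n, 0) it lies on -n or
   0: this is a first meeting after M, a contradiction. *)

Lemma window_of_oscillation (S : R -> Prop) (h : R -> R) (K s0 : R) :
  S s0 -> (forall s t, S s -> S t -> h t - h s <= K) ->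
  exists m, forall t, S t -> m <= h t <= m + K.
Proof.
  intros Hs0 Hosc.
  destruct (completeness (fun x => exists t, S t /\ x = h t)) as [sup [Hub Hleast]].
  - exists (h s0 + K). intros x [t [Ht ->]]. specialize (Hosc s0 t Hs0 Ht). lra.
  - exists (h s0). eauto.
  - exists (sup - K). intros t Ht. split.
    + assert (sup <= h t + K); [|lra].
      apply Hleast. intros x [s [Hs ->]]. specialize (Hosc t s Ht Hs). lra.
    + assert (h t <= sup) by (apply Hub; eauto). lra.
Qed.

Definition lipschitz_nonneg (L : R) (g : R -> R) : Prop :=
  forall s t, 0 <= s -> 0 <= t -> Rabs (g t - g s) <= L * Rabs (t - s).

Lemma lipschitz_close (L : R) (g : R -> R) (s eps : R) :
  0 <= L -> lipschitz_nonneg L g -> 0 <= s -> 0 < eps ->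
  exists d, 0 < d /\
    forall t, 0 <= t -> Rabs (t - s) <= d -> Rabs (g t - g s) < eps.
Proof.
  intros HL Hg Hs Heps.
  assert (Hd : 0 < eps / (L + 1)) by (apply Rdiv_lt_0_compat; lra).
  exists (eps / (L + 1)). split; [exact Hd|].
  intros t Ht Hts. eapply Rle_lt_trans; [apply Hg; lra|].
  apply Rle_lt_trans with (L * (eps / (L + 1))).
  - apply Rmult_le_compat_l; lra.
  - replace (L * (eps / (L + 1))) with (eps - eps / (L + 1)) by (field; lra). lra.
Qed.

Section FirstExit.

Variables (g : R -> R) (L lo hi : R).
Hypothesis L_ge0 : 0 <= L.
Hypothesis g_lip : lipschitz_nonneg L g.
Hypothesis g0_inside : lo < g 0 < hi.

(* Times up to which g has stayed inside (lo, hi); the exit time is their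
   supremum. *)
Definition safe (t : R) : Prop :=
  0 <= t /\ forall s, 0 <= s <= t -> lo < g s < hi.

Lemma inside_before_lub (tau : R) :
  is_lub safe tau -> forall t, 0 <= t < tau -> lo < g t < hi.
Proof.
  intros [_ Hleast] t [Ht Htau].
  assert (Hbound : ~ (lo < g t < hi) -> tau <= t).
  { intros Hout. apply Hleast. intros x [_ Hsafe].
    destruct (Rle_dec x t) as [Hle|Hgt]; [exact Hle|].
    exfalso. apply Hout, Hsafe. lra. }
  destruct (Rlt_dec lo (g t)), (Rlt_dec (g t) hi); try (split; assumption);
    assert (tau <= t) by (apply Hbound; intros [? ?]; contradiction); lra.
Qed.

Lemma lub_approached_from_inside (tau : R) :
  is_lub safe tau -> 0 <= tau ->
  forall eps, 0 < eps ->
  exists t, 0 <= t /\ lo < g t < hi /\ Rabs (g t - g tau) < eps.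
Proof.
  intros Hlub Htau eps Heps.
  destruct (lipschitz_close L g tau eps L_ge0 g_lip Htau Heps) as [d [Hd Hclose]].
  destruct (Req_dec tau 0) as [->|Htau0].
  - exists 0. rewrite Rminus_diag, Rabs_R0. repeat split; lra.
  - set (t := Rmax 0 (tau - d)).
    assert (Ht0 : 0 <= t) by apply Rmax_l.
    assert (Htd : tau - d <= t) by apply Rmax_r.
    assert (Httau : t < tau) by (apply Rmax_lub_lt; lra).
    exists t. repeat split; try lra;
      try (apply (inside_before_lub tau Hlub); lra).
    apply Hclose; [lra|]. rewrite Rabs_left1; lra.
Qed.

Lemma lub_in_closed_interval (tau : R) :
  is_lub safe tau -> 0 <= tau -> lo <= g tau <= hi.
Proof.
  intros Hlub Htau.
  split; apply Rnot_lt_le; intros Hout.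
  - destruct (lub_approached_from_inside tau Hlub Htau (lo - g tau))
      as [t [_ [Hin Hclose]]]; [lra|].
    revert Hclose. split_Rabs; lra.
  - destruct (lub_approached_from_inside tau Hlub Htau (g tau - hi))
      as [t [_ [Hin Hclose]]]; [lra|].
    revert Hclose. split_Rabs; lra.
Qed.

(* If g were still inside at the supremum, it would stay inside a little
   longer, contradicting maximality. *)
Lemma lub_not_inside (tau : R) :
  is_lub safe tau -> 0 <= tau -> ~ (lo < g tau < hi).
Proof.
  intros Hlub Htau Hin.
  set (eps := Rmin (g tau - lo) (hi - g tau)).
  assert (Heps : 0 < eps) by (apply Rmin_pos; lra).
  assert (Heps1 : eps <= g tau - lo) by apply Rmin_l.
  assert (Heps2 : eps <= hi - g tau) by apply Rmin_r.
  destruct (lipschitz_close L g tau eps L_ge0 g_lip Htau Heps) as [d [Hd Hclose]].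
  assert (Hsafe : safe (tau + d)).
  { split; [lra|]. intros s [Hs Hsd].
    destruct (Rlt_dec s tau) as [Hlt|Hge].
    - apply (inside_before_lub tau Hlub). lra.
    - assert (Hgs : Rabs (g s - g tau) < eps) by (apply Hclose; [lra|]; rewrite Rabs_right; lra).
      revert Hgs. split_Rabs; lra. }
  destruct Hlub as [Hub _].
  specialize (Hub _ Hsafe). lra.
Qed.

(* The supremum of the safe times, which is finite since g leaves the interval
   at t0, is the first exit time. *)
Lemma first_exit (t0 : R) :
  0 <= t0 -> ~ (lo < g t0 < hi) ->
  exists tau, 0 <= tau /\ (g tau = lo \/ g tau = hi) /\
    forall t, 0 <= t < tau -> lo < g t < hi.
Proof.
  intros Ht0 Hout.
  destruct (completeness safe) as [tau Hlub].
  - exists t0. intros x [_ Hsafe].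
    destruct (Rle_dec x t0) as [Hle|Hgt]; [exact Hle|].
    exfalso. apply Hout, Hsafe. lra.
  - exists 0. split; [lra|]. intros s Hs. replace s with 0 by lra. exact g0_inside.
  - assert (Htau : 0 <= tau).
    { apply (proj1 Hlub). split; [lra|]. intros s Hs. replace s with 0 by lra.
      exact g0_inside. }
    exists tau. split; [exact Htau|split].
    + pose proof (lub_in_closed_interval tau Hlub Htau) as Hclosed.
      pose proof (lub_not_inside tau Hlub Htau) as Hnot.
      destruct (Req_dec (g tau) lo); [left; assumption|].
      destruct (Req_dec (g tau) hi); [right; assumption|].
      exfalso. apply Hnot. lra.
    + exact (inside_before_lub tau Hlub).
Qed.

End FirstExit.

Lemma no_multiple_strictly_between (n : R) (k : Z) :
  0 < n -> ~ (- n < IZR k * n < 0).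
Proof.
  intros Hn [Hlo Hhi].
  destruct (Z.le_gt_cases 0 k) as [Hk|Hk].
  - apply IZR_le in Hk. nra.
  - assert (IZR k <= -1) by (apply IZR_le; lia). nra.
Qed.

Lemma first_meeting_at_start (n c : R) (p : R -> R) (a : R) :
  algorithm p -> first_meeting n c p a a 0.
Proof.
  intros [Hp0 _]. split; [lra|split].
  - exists 0%Z. unfold Defs.pos. rewrite !Rmult_0_r, Hp0. ring.
  - intros t Ht. lra.
Qed.

Section Drift.

Variables (p : R -> R) (c : R).

Definition drift (t : R) : R := p (c * t) - p t.

Lemma meet_iff_drift (n a b t : R) :
  meet n c p a b t <-> exists k : Z, drift t - (b - a) = IZR k * n.
Proof.
  unfold meet, same_point, Defs.pos, drift. rewrite Rmult_1_l.
  split; intros [k Hk]; exists k; lra.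
Qed.

Hypothesis p_alg : algorithm p.
Hypothesis c_gt1 : 1 < c.

Lemma drift_small (t : R) : 0 <= t -> Rabs (drift t) <= (c - 1) * t.
Proof.
  intros Ht. destruct p_alg as [_ Hlip]. unfold drift.
  eapply Rle_trans; [apply Hlip; nra|].
  rewrite Rabs_right; nra.
Qed.

Lemma drift_lipschitz : lipschitz_nonneg (c + 1) drift.
Proof.
  intros s t Hs Ht. destruct p_alg as [_ Hlip]. unfold drift.
  pose proof (Hlip (c * t) (c * s) ltac:(nra) ltac:(nra)) as Hfast.
  pose proof (Hlip t s Ht Hs) as Hslow.
  replace (c * t - c * s) with (c * (t - s)) in Hfast by ring.
  rewrite Rabs_mult, (Rabs_right c) in Hfast by lra.
  revert Hfast Hslow. split_Rabs; nra.
Qed.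

(* Up to time t the drift oscillates by at most (c^2 - 1) t / c: for s <= t/c
   use that both values are small, otherwise the Lipschitz bound. *)
Lemma drift_oscillation_ordered (s t : R) :
  0 <= s <= t -> Rabs (drift t - drift s) <= (c ^ 2 - 1) / c * t.
Proof.
  intros Hst.
  pose proof (drift_small t ltac:(lra)) as Ht.
  pose proof (drift_small s ltac:(lra)) as Hs.
  pose proof (drift_lipschitz s t ltac:(lra) ltac:(lra)) as Hlip.
  rewrite (Rabs_right (t - s)) in Hlip by lra.
  apply (Rmult_le_reg_l c); [lra|].
  replace (c * ((c ^ 2 - 1) / c * t)) with ((c ^ 2 - 1) * t) by (field; lra).
  destruct (Rle_lt_dec (c * s) t).
  - assert (Rabs (drift t - drift s) <= (c - 1) * t + (c - 1) * s)
      by (revert Ht Hs; split_Rabs; lra).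
    nra.
  - nra.
Qed.

Lemma drift_oscillation (M s t : R) :
  0 <= s <= M -> 0 <= t <= M -> Rabs (drift t - drift s) <= (c ^ 2 - 1) / c * M.
Proof.
  intros Hs Ht.
  assert (Hcoef : 0 <= (c ^ 2 - 1) / c)
    by (apply Rmult_le_pos; [nra | apply Rlt_le, Rinv_0_lt_compat; lra]).
  destruct (Rle_dec s t).
  - pose proof (drift_oscillation_ordered s t ltac:(lra)). nra.
  - rewrite Rabs_minus_sym.
    pose proof (drift_oscillation_ordered t s ltac:(lra)). nra.
Qed.

End Drift.

Lemma oscillation_below_period (n c M : R) :
  1 < c -> M < c * n / (c ^ 2 - 1) -> (c ^ 2 - 1) / c * M < n.
Proof.
  intros Hc Hlt.
  apply (Rmult_lt_compat_l (c ^ 2 - 1)) in Hlt; [|nra].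
  replace ((c ^ 2 - 1) * (c * n / (c ^ 2 - 1))) with (c * n) in Hlt by (field; nra).
  apply (Rmult_lt_reg_l c); [lra|].
  replace (c * ((c ^ 2 - 1) / c * M)) with ((c ^ 2 - 1) * M) by (field; lra). lra.
Qed.

Lemma confining_offset (n c M : R) (p : R -> R) :
  algorithm p -> 1 < c -> 0 <= M -> (c ^ 2 - 1) / c * M < n ->
  exists y, forall t, 0 <= t <= M -> - n < drift p c t - y < 0.
Proof.
  intros Halg Hc HM HKn.
  set (K := (c ^ 2 - 1) / c * M) in HKn.
  destruct (window_of_oscillation (fun t => 0 <= t <= M) (drift p c) K 0) as [m Hm].
  - lra.
  - intros s t Hs Ht. eapply Rle_trans; [apply Rle_abs|].
    exact (drift_oscillation p c Halg Hc M s t Hs Ht).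
  - exists (m + K + (n - K) / 2). intros t Ht. specialize (Hm t Ht). lra.
Qed.

(* If the agents started at -y and 0 meet at all, while the shifted drift starts
   inside (-n, 0), then they have a first meeting, namely the first exit of the
   shifted drift from (-n, 0); at that time it lies on -n or 0. *)
Lemma first_meeting_at_exit (n c y : R) (p : R -> R) :
  0 < n -> 1 < c -> algorithm p ->
  - n < drift p c 0 - y < 0 ->
  (exists t, 0 <= t /\ meet n c p (- y) 0 t) ->
  exists tau, first_meeting n c p (- y) 0 tau /\ ~ (- n < drift p c tau - y < 0).
Proof.
  intros Hn Hc Halg Hstart [t0 [Ht0 Hmeet0]].
  set (g := fun t => drift p c t - y) in Hstart.
  assert (Hmeet : forall t, meet n c p (- y) 0 t <-> exists k : Z, g t = IZR k * n).
  { intros t. rewrite meet_iff_drift. unfold g.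
    split; intros [k Hk]; exists k; lra. }
  assert (Hglip : lipschitz_nonneg (c + 1) g).
  { intros s t Hs Ht. unfold g.
    replace (drift p c t - y - (drift p c s - y)) with (drift p c t - drift p c s) by ring.
    exact (drift_lipschitz p c Halg Hc s t Hs Ht). }
  apply Hmeet in Hmeet0. destruct Hmeet0 as [k0 Hk0].
  destruct (first_exit g (c + 1) (- n) 0 ltac:(lra) Hglip Hstart t0 Ht0)
    as [tau [Htau [Hend Hbefore]]].
  { rewrite Hk0. apply no_multiple_strictly_between. exact Hn. }
  exists tau. split; [split; [exact Htau|split] |].
  - apply Hmeet. destruct Hend as [Hend|Hend]; [exists (-1)%Z | exists 0%Z];
      rewrite Hend; simpl; ring.
  - intros t Ht Hmt. apply Hmeet in Hmt. destruct Hmt as [k Hk].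
    apply (no_multiple_strictly_between n k Hn). rewrite <- Hk. exact (Hbefore t Ht).
  - fold (g tau). destruct Hend as [-> | ->]; lra.
Qed.

Theorem theorem1 (n c : R) (p : R -> R) :
  0 < n -> 1 < c ->
  algorithm p ->
  guarantees_rendezvous n c p ->
  rendezvous_time_at_least n c p (c * n / (c ^ 2 - 1)).
Proof.
  intros Hn Hc Halg Hgr M HM.
  assert (HM0 : 0 <= M) by exact (HM 0 0 0 (first_meeting_at_start n c p 0 Halg)).
  destruct (Rle_lt_dec (c * n / (c ^ 2 - 1)) M) as [Hle|Hlt]; [exact Hle|exfalso].
  destruct (confining_offset n c M p Halg Hc HM0 (oscillation_below_period n c M Hc Hlt))
    as [y Hconfined].
  destruct (first_meeting_at_exit n c y p Hn Hc Halg (Hconfined 0 ltac:(lra)) (Hgr (- y) 0))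
    as [tau [Hfirst Hexit]].
  apply Hexit, Hconfined. split; [apply (proj1 Hfirst) | exact (HM _ _ _ Hfirst)].
Qed.
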